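(* Let $\Lambda=KQ/\langle I\rangle$ be a gentle algebra over an algebraically closed field $K$, let $\Gamma=KQ^{Aus}/\langle I^{Aus}\rangle$, and let $\Phi:\mathrm{mod}\,\Lambda\to\mathrm{mod}\,\Gamma$ and $\mathrm{res}:\mathrm{mod}\,\Gamma\to\mathrm{mod}\,\Lambda$ be the functors described in the context. Then: (i) For all $M\in\mathrm{mod}\,\Lambda$ and $N\in\mathrm{mod}\,\Gamma$, the maps $\mathrm{Hom}_\Gamma(\Phi(M),N)\xrightarrow{\mathrm{res}}\mathrm{Hom}_\Lambda(\mathrm{res}\,\Phi(M),\mathrm{res}\,N)\cong\mathrm{Hom}_\Lambda(M,\mathrm{res}\,N)$ and $\mathrm{Hom}_\Gamma(N,\Phi(M))\xrightarrow{\mathrm{res}}\mathrm{Hom}_\Lambda(\mathrm{res}\,N,\mathrm{res}\,\Phi(M))\cong\mathrm{Hom}_\Lambda(\mathrm{res}\,N,M)$ are injective (where the isomorphisms come from the natural isomorphism $\mathrm{res}\,\Phi(M)\cong M$). (ii) The functor $\Phi$ is fully faithful. In particular, $\Phi$ preserves injective and surjective morphisms.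
   Context: Conventions: arrows $\alpha:s(\alpha)\to t(\alpha)$; paths are composed right to left, so $\beta\alpha$ means $\alpha$ followed by $\beta$. A gentle algebra is $\Lambda=KQ/\langle I\rangle$ (finite dimensional) where $I$ is a set of length-$2$ paths such that: each vertex is the start of at most two and the end of at most two arrows; for each arrow $\alpha$ there is at most one arrow $\beta$ with $t(\beta)=s(\alpha)$, $\alpha\beta\notin I$, at most one $\gamma$ with $s(\gamma)=t(\alpha)$, $\gamma\alpha\notin I$, at most one $\beta$ with $t(\beta)=s(\alpha)$, $\alpha\beta\in I$, and at most one $\gamma$ with $s(\gamma)=t(\alpha)$, $\gamma\alpha\in I$. Modules are finite dimensional left modules, identified with representations $M=((M_i)_{i\in Q_0},(M_\alpha)_{\alpha\in Q_1})$ of $(Q,I)$. $\mathcal{C}(\Lambda)$ is the set of repetition-free cyclic paths $\alpha_1\cdots\alpha_n$ (up to cyclic permutation) with $\alpha_i\alpha_{i+1}\in I$ for all $i$ (indices mod $n$). $Q_1^{cyc}$ is the set of arrows lying on some cycle in $\mathcal{C}(\Lambda)$ and $Q_1^{ncyc}=Q_1\setminus Q_1^{cyc}$. The quiver $Q^{Aus}$ has vertex set $Q_0\sqcup Q_1^{cyc}$ and arrow set $Q_1^{ncyc}\sqcup\{\alpha^+:s(\alpha)\to\alpha\mid\alpha\in Q_1^{cyc}\}\sqcup\{\alpha^-:\alpha\to t(\alpha)\mid\alpha\in Q_1^{cyc}\}$; $I^{Aus}=\{\beta^+\alpha^-\mid\beta\alpha\in I,\ \alpha,\beta\in Q_1^{cyc}\}\cup\{\beta\alpha\mid\beta\alpha\in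 I,\ \alpha,\beta\in Q_1^{ncyc}\}$. The algebra $\Gamma=KQ^{Aus}/\langle I^{Aus}\rangle$ is (isomorphic to) the Cohen–Macaulay Auslander algebra of $\Lambda$. The functor $\Phi$: for $M\in\mathrm{mod}\,\Lambda$, $\Phi(M)=\widehat{M}$ has $\widehat{M}_i=M_i$ for $i\in Q_0$, $\widehat{M}_\alpha=\mathrm{Im}\,M_\alpha$ for $\alpha\in Q_1^{cyc}$, $\widehat{M}_\beta=M_\beta$ for $\beta\in Q_1^{ncyc}$, and $\widehat{M}_{\alpha^+}:M_{s(\alpha)}\to\mathrm{Im}\,M_\alpha$, $\widehat{M}_{\alpha^-}:\mathrm{Im}\,M_\alpha\to M_{t(\alpha)}$ the surjection and inclusion factoring $M_\alpha$; on morphisms $\Phi$ acts by the induced maps. The functor $\mathrm{res}$: for $N\in\mathrm{mod}\,\Gamma$, $(\mathrm{res}\,N)_i=N_i$ for $i\in Q_0$, $(\mathrm{res}\,N)_\alpha=N_\alpha$ for $\alpha\in Q_1^{ncyc}$, and $(\mathrm{res}\,N)_\alpha=N_{\alpha^-}N_{\alpha^+}$ for $\alpha\in Q_1^{cyc}$; on morphisms it keeps the components at vertices in $Q_0$. *)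

From mathcomp Require Import all_boot all_order all_algebra.
Set Implicit Arguments.
Unset Strict Implicit.
Unset Printing Implicit Defensive.
Import GRing.Theory.
Local Open Scope ring_scope.

(* I : rel A, where [I b a] means that the length-2 path "b a"        *)
(* (a followed by b) lies in the set of relations.                    *)
(* A representation M assigns K^(rdim M v) to each vertex v and to    *)
(* each arrow a a matrix rmor M a acting on ROW vectors:              *)
(*   K^(rdim M (src a)) -> K^(rdim M (tgt a)),  x |-> x *m rmor M a.  *)
(* Hence the path "b a" acts by  rmor M a *m rmor M b.                *)
Section Representations.
Variables (K : fieldType) (V A : finType) (src tgt : A -> V) (I : rel A).

Record rep := Rep {
  rdim : V -> nat;
  rmor : forall a : A, 'M[K]_(rdim (src a), rdim (tgt a)) }.

Definition is_module (M : rep) : Prop :=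
  forall (a b : A) (e : tgt a = src b), I b a ->
    rmor M a *m castmx (congr1 (rdim M) (esym e), erefl) (rmor M b) = 0.

Definition rhom (M N : rep) := forall v : V, 'M[K]_(rdim M v, rdim N v).

Definition is_rhom (M N : rep) (f : rhom M N) : Prop :=
  forall a : A, rmor M a *m f (tgt a) = f (src a) *m rmor N a.

Definition hom_injective (M N : rep) (f : rhom M N) : Prop :=
  forall v, row_free (f v).
Definition hom_surjective (M N : rep) (f : rhom M N) : Prop :=
  forall v, row_full (f v).

End Representations.

Section Gentle.
Variables (V A : finType) (src tgt : A -> V) (I : rel A).

(* a path a_1 ... a_n (a_1 first, listed left to right) with no       *)
(* subpath in I; the empty sequence counts as well                    *)
Definition relfree_path (s : seq A) : bool :=
  if s is a :: s' then path (fun x y => (tgt x == src y) && ~~ I y x) a s'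
  else true.

Definition gentle : Prop :=
  (* relations are paths of length 2 *)
      (forall a b, I b a -> tgt a = src b) /\
      (forall v, #|[set a | src a == v]| <= 2)%N /\
      (forall v, #|[set a | tgt a == v]| <= 2)%N /\
      (forall a, #|[set b | (tgt b == src a) && ~~ I a b]| <= 1)%N /\
      (forall a, #|[set c | (src c == tgt a) && ~~ I c a]| <= 1)%N /\
      (forall a, #|[set b | (tgt b == src a) && I a b]| <= 1)%N /\
      (forall a, #|[set c | (src c == tgt a) && I c a]| <= 1)%N /\
      (* KQ/<I> is finite dimensional: only finitely many paths avoid I *)
      (exists n : nat, forall s : seq A, size s = n -> ~~ relfree_path s).

(* C(Lambda): repetition-free cyclic sequences a_1 ... a_n with       *)
(* a_i a_(i+1) in I (indices mod n)                                   *)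
Definition rel_cycle (s : seq A) : bool :=
  [&& s != [::], uniq s & cycle I s].

(* a lies on some cycle of C(Lambda); since such cycles are           *)
(* repetition-free, their length is at most #|A|                      *)
Definition on_cycle (a : A) : bool :=
  [exists n : 'I_#|A|.+1, [exists t : n.-tuple A, rel_cycle t && (a \in t)]].

Definition cycA := {a : A | on_cycle a}.
Definition ncycA := {a : A | ~~ on_cycle a}.

Definition VAus := (V + cycA)%type.
(* inl b = b in Q_1^ncyc ; inr (inl a) = a^+ ; inr (inr a) = a^- *)
Definition AAus := (ncycA + (cycA + cycA))%type.

Definition srcAus (x : AAus) : VAus :=
  match x with
  | inl b => inl (src (val b))
  | inr (inl a) => inl (src (val a))
  | inr (inr a) => inr a
  end.

Definition tgtAus (x : AAus) : VAus :=
  match x with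
  | inl b => inl (tgt (val b))
  | inr (inl a) => inr a
  | inr (inr a) => inl (tgt (val a))
  end.

(* I^Aus : [IAus y x] means "y x" in I^Aus *)
Definition IAus (y x : AAus) : bool :=
  match y, x with
  | inl b, inl a => I (val b) (val a)           (* b a, both non-cyclic *)
  | inr (inl b), inr (inr a) => I (val b) (val a) (* b^+ a^-          *)
  | _, _ => false
  end.

End Gentle.

Section Functors.
Variables (K : fieldType) (V A : finType) (src tgt : A -> V) (I : rel A).

Local Notation repL := (rep K src tgt).
Local Notation repG := (rep K (srcAus src (I:=I)) (tgtAus tgt (I:=I))).

(* Phi(M): at a cyclic arrow-vertex a we take Im M_a, realised as the *)
(* row space of row_base (M_a) (of dimension \rank M_a); a^- is the   *)
(* inclusion Im M_a -> M_(t a) and a^+ the corestriction of M_a.      *)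
Definition Phi_dim (M : repL) (x : VAus V I) : nat :=
  match x with
  | inl v => rdim M v
  | inr a => \rank (rmor M (val a))
  end.

Definition Phi_mor (M : repL) (x : AAus I) :
    'M[K]_(Phi_dim M (srcAus src x), Phi_dim M (tgtAus tgt x)) :=
  match x as x0 return
    'M[K]_(Phi_dim M (srcAus src x0), Phi_dim M (tgtAus tgt x0)) with
  | inl b => rmor M (val b)
  | inr (inl a) => rmor M (val a) *m pinvmx (row_base (rmor M (val a)))
  | inr (inr a) => row_base (rmor M (val a))
  end.

Definition Phi (M : repL) : repG := @Rep K _ _ _ _ (Phi_dim M) (Phi_mor M).

Definition Phi_hom (M N : repL) (f : rhom M N) : rhom (Phi M) (Phi N) :=
  fun x =>
  match x as x0 return 'M[K]_(Phi_dim M x0, Phi_dim N x0) with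
  | inl v => f v
  | inr a => row_base (rmor M (val a)) *m f (tgt (val a))
               *m pinvmx (row_base (rmor N (val a)))
  end.

Definition res_dim (N : repG) (v : V) : nat := rdim N (inl v).

Definition res_mor (N : repG) (a : A) :
    'M[K]_(res_dim N (src a), res_dim N (tgt a)) :=
  match on_cycle I a as c return on_cycle I a = c ->
        'M[K]_(res_dim N (src a), res_dim N (tgt a)) with
  | true => fun h =>
      rmor N (inr (inl (exist _ a h))) *m rmor N (inr (inr (exist _ a h)))
  | false => fun h => rmor N (inl (exist _ a (negbT h)))
  end erefl.

Definition res (N : repG) : repL := @Rep K _ _ _ _ (res_dim N) (res_mor N).

Definition res_hom (N N' : repG) (g : rhom N N') : rhom (res N) (res N') :=
  fun v => g (inl v).

End Functors.

From mathcomp Require Import all_boot all_order all_algebra.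

(* Everything is decided at the vertices [inl v] of Q_0 together with the two arrows
   a^+ and a^- through each new vertex a.  The map a^+ of Phi(M) is surjective and
   a^- is injective, so a Gamma-morphism out of (into) Phi(M) is determined at a by
   its component at s(a) (at t(a)).  Conversely, M_a factors as a^- a^+, and a
   morphism f : M -> N maps Im M_a into Im N_a; restricting f there gives the
   component at a of Phi(f), and it inherits injectivity and surjectivity from f. *)

Set Implicit Arguments.
Unset Strict Implicit.
Unset Printing Implicit Defensive.
Import GRing.Theory.
Local Open Scope ring_scope.

Section RowBase.
Variable F : fieldType.

Lemma mulmx_pinv_row_baseK m n (A : 'M[F]_(m, n)) :
  A *m pinvmx (row_base A) *m row_base A = A.
Proof. by apply: mulmxKpV; rewrite eq_row_base. Qed.

Lemma row_full_mulmx_pinv_row_base m n (A : 'M[F]_(m, n)) :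
  row_full (A *m pinvmx (row_base A)).
Proof.
rewrite /row_full eqn_leq rank_leq_col /=.
by have := mxrankM_maxl (A *m pinvmx (row_base A)) (row_base A);
  rewrite mulmx_pinv_row_baseK.
Qed.

Lemma mulmx_row_baseK m n p (A : 'M[F]_(m, n)) (G : 'M[F]_(p, \rank A)) :
  G *m row_base A *m pinvmx (row_base A) = G.
Proof. by apply: (row_free_inj (row_base_free A)); apply/mulmxKpV/submxMl. Qed.

Section InducedOnImages.
Variables (m n p q : nat) (A : 'M[F]_(m, n)) (B : 'M[F]_(p, q)).
Variables (f : 'M[F]_(n, q)) (h : 'M[F]_(m, p)).
Hypothesis commAB : A *m f = h *m B.

Let fA := row_base A *m f *m pinvmx (row_base B).

Lemma submx_row_base_mul : (row_base A *m f <= row_base B)%MS.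
Proof. by rewrite !eq_row_base (eqmxMr _ (eq_row_base A)) commAB submxMl. Qed.

Lemma induced_row_baseK : fA *m row_base B = row_base A *m f.
Proof. exact: mulmxKpV submx_row_base_mul. Qed.

Lemma row_free_induced_row_base : row_free f -> row_free fA.
Proof.
move=> free_f; rewrite /row_free eqn_leq rank_leq_row /=.
have := mxrankM_maxl fA (row_base B).
by rewrite induced_row_baseK mxrankMfree // eq_row_base.
Qed.

Lemma row_full_induced_row_base : row_full h -> row_full fA.
Proof.
move=> full_h; rewrite /row_full -(mxrankMfree _ (row_base_free B)).
rewrite induced_row_baseK (eqmxMr _ (eq_row_base A)) commAB.
by rewrite (eqmxMfull _ full_h).
Qed.

End InducedOnImages.
End RowBase.

Section PhiFullyFaithful.
Variables (K : fieldType) (V A : finType) (src tgt : A -> V) (I : rel A).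

Local Notation repL := (rep K src tgt).
Local Notation repG := (rep K (srcAus src (I:=I)) (tgtAus tgt (I:=I))).
Local Notation Phi := (Phi I).
Local Notation Phi_hom := (Phi_hom (I:=I)).

Lemma res_hom_inj_from_Phi (M : repL) (N : repG) (g g' : rhom (Phi M) N) :
  is_rhom g -> is_rhom g' ->
  (forall v, res_hom g v = res_hom g' v) -> forall x, g x = g' x.
Proof.
move=> gP g'P eq_res [v|a]; first exact: eq_res.
apply: (row_full_inj (row_full_mulmx_pinv_row_base (rmor M (val a)))).
rewrite [LHS](gP (inr (inl a))) [RHS](g'P (inr (inl a))).
by congr (_ *m _); exact: eq_res.
Qed.

Lemma res_hom_inj_to_Phi (M : repL) (N : repG) (g g' : rhom N (Phi M)) :
  is_rhom g -> is_rhom g' ->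
  (forall v, res_hom g v = res_hom g' v) -> forall x, g x = g' x.
Proof.
move=> gP g'P eq_res [v|a]; first exact: eq_res.
apply: (row_free_inj (row_base_free (rmor M (val a)))).
rewrite -[LHS](gP (inr (inr a))) -[RHS](g'P (inr (inr a))).
by congr (_ *m _); exact: eq_res.
Qed.

Lemma Phi_hom_inj (M N : repL) (f f' : rhom M N) :
  (forall x, Phi_hom f x = Phi_hom f' x) -> forall v, f v = f' v.
Proof. by move=> eq_Phi v; exact: (eq_Phi (inl v)). Qed.

Section Full.
Variables (M N : repL) (g : rhom (Phi M) (Phi N)).
Hypothesis gP : is_rhom g.

Let f : rhom M N := res_hom g.

Lemma is_rhom_res_Phi : is_rhom f.
Proof.
move=> a; case: (boolP (on_cycle I a)) => [cyc_a | ncyc_a]; last first.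
  exact: (gP (inl (exist _ a ncyc_a))).
pose c : cycA I := exist _ a cyc_a.
have plusP := gP (inr (inl c)); have minusP := gP (inr (inr c)); simpl in plusP, minusP.
rewrite -[rmor M a]mulmx_pinv_row_baseK -[rmor N a]mulmx_pinv_row_baseK.
by rewrite -mulmxA minusP mulmxA plusP !mulmxA.
Qed.

Lemma Phi_hom_res_Phi x : Phi_hom f x = g x.
Proof. by case: x => [v|a] //=; rewrite (gP (inr (inr a))) mulmx_row_baseK. Qed.

End Full.

Lemma Phi_hom_row_free (M N : repL) (f : rhom M N) :
  is_rhom f -> hom_injective f -> hom_injective (Phi_hom f).
Proof.
move=> fP free_f [v|a] /=; first exact: free_f.
exact/row_free_induced_row_base/free_f/fP.
Qed.

Lemma Phi_hom_row_full (M N : repL) (f : rhom M N) :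
  is_rhom f -> hom_surjective f -> hom_surjective (Phi_hom f).
Proof.
move=> fP full_f [v|a] /=; first exact: full_f.
exact/row_full_induced_row_base/full_f/fP.
Qed.

End PhiFullyFaithful.

Theorem lemma3p3 (K : closedFieldType) (V A : finType) (src tgt : A -> V)
    (I : rel A) :
  gentle src tgt I ->
  (* (i) *)
  (forall (M : rep K src tgt) (N : rep K (srcAus src (I:=I)) (tgtAus tgt (I:=I))),
     is_module I M -> is_module (IAus (I:=I)) N ->
     (forall g g' : rhom (Phi I M) N,
        is_rhom g -> is_rhom g' ->
        (forall v, res_hom g v = res_hom g' v) -> forall x, g x = g' x) /\
     (forall g g' : rhom N (Phi I M),
        is_rhom g -> is_rhom g' ->
        (forall v, res_hom g v = res_hom g' v) -> forall x, g x = g' x)) /\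
  (* (ii) *)
  (forall M N : rep K src tgt, is_module I M -> is_module I N ->
     (* faithful *)
     (forall f f' : rhom M N, is_rhom f -> is_rhom f' ->
        (forall x, Phi_hom (I:=I) f x = Phi_hom (I:=I) f' x) -> forall v, f v = f' v) /\
     (* full *)
     (forall g : rhom (Phi I M) (Phi I N), is_rhom g ->
        exists f : rhom M N, is_rhom f /\ forall x, Phi_hom (I:=I) f x = g x) /\
     (* preserves injective and surjective morphisms *)
     (forall f : rhom M N, is_rhom f -> hom_injective f ->
        hom_injective (Phi_hom (I:=I) f)) /\
     (forall f : rhom M N, is_rhom f -> hom_surjective f ->
        hom_surjective (Phi_hom (I:=I) f))).
Proof.
move=> _; split=> [M N _ _ | M N _ _].
  by split; [exact: res_hom_inj_from_Phi | exact: res_hom_inj_to_Phi].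
split; first by move=> f f' _ _; exact: Phi_hom_inj.
split.
  move=> g gP; exists (res_hom g).
  by split; [exact: is_rhom_res_Phi | exact: Phi_hom_res_Phi].
by split; [exact: Phi_hom_row_free | exact: Phi_hom_row_full].
Qed.
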